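(* Let $G$ be a group of order $n\ge 2$ and let $m\ge 3$ be an odd integer. Let $\Gamma$ be the digraph with vertex set $G\times G\times\mathbb{Z}_m$ in which $(x,y,i)\to(u,v,j)$ if and only if at least one of the following holds: (1) $x=u$, $i=j$ and $y\neq v$; (2) $y=v$, $i=j$ and $x\neq u$; (3) $u=xy$ and $j\in\{i+1,i+2,\dots,i+\tfrac{m-1}{2}\}$ (indices mod $m$); (4) $v=xy$ and $j\in\{i-\tfrac{m-1}{2},\dots,i-2,i-1\}$ (indices mod $m$). Then $\Gamma$ is a directed strongly regular graph with parameters $(v,k,t,\lambda,\mu)=(mn^2,\ mn+n-2,\ 2n+m-3,\ n+m-3,\ m+1)$.
   Context: A digraph here has no loops and no multiple arcs; its adjacency matrix $A$ (rows/columns indexed by the vertices) has $A_{xy}=1$ iff $x\to y$. A directed strongly regular graph with parameters $(v,k,t,\lambda,\mu)$ is a digraph on $v$ vertices whose adjacency matrix $A$ satisfies $A^2=tI+\lambda A+\mu(J-I-A)$ and $AJ=JA=kJ$, where $I$ is the identity and $J$ the all-ones matrix. Products $xy$ are taken in $G$. *)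

From HB Require Import structures.
From mathcomp Require Import all_boot all_order all_algebra all_fingroup.
Set Implicit Arguments. Unset Strict Implicit. Unset Printing Implicit Defensive.
Import GRing.Theory.

(* Directed strongly regular graphs, stated entrywise on the integer
   adjacency matrix A (indexed by the finite vertex type V):
   A^2 = t I + lambda A + mu (J - I - A),  A J = J A = k J,
   together with the digraph being loopless (no multiple arcs is automatic
   for a relation). *)
Definition adjm (V : finType) (adj : rel V) (x y : V) : int := (adj x y : nat)%:Z.

Definition is_dsrg (V : finType) (adj : rel V) (v k t lam mu : nat) : Prop :=
  [/\ #|V| = v,
      (forall x : V, ~~ adj x x),
      (forall x : V, (\sum_(y : V) adjm adj x y = k%:Z)%R),
      (forall y : V, (\sum_(x : V) adjm adj x y = k%:Z)%R)
    & (forall x y : V,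
        (\sum_(z : V) adjm adj x z * adjm adj z y =
          t%:Z * ((x == y) : nat)%:Z + lam%:Z * adjm adj x y
          + mu%:Z * (1 - ((x == y) : nat)%:Z - adjm adj x y))%R)].

Definition fwd_range (m : nat) (i j : 'I_m) : bool :=
  [exists d : 'I_m, (1 <= d <= (m - 1)./2) && (val j == (i + d) %% m)].
Definition bwd_range (m : nat) (i j : 'I_m) : bool :=
  [exists d : 'I_m, (1 <= d <= (m - 1)./2) && (val j == (i + (m - d)) %% m)].

Definition Gamma_adj (gT : finGroupType) (m : nat) : rel (gT * gT * 'I_m) :=
  fun a b =>
    let: (x, y, i) := a in
    let: (u, v, j) := b in
    [|| [&& x == u, i == j & y != v],
        [&& y == v, i == j & x != u],
        (u == (x * y)%g) && fwd_range i j
      | (v == (x * y)%g) && bwd_range i j].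

From mathcomp Require Import all_boot all_order all_algebra all_fingroup.
From mathcomp Require Import zify ring.
Set Implicit Arguments. Unset Strict Implicit. Unset Printing Implicit Defensive.
Import GRing.Theory.
Local Open Scope ring_scope.

(* Write a vertex as (p, i) with p = (x, y) in G x G and i in Z_m.  The adjacency
   matrix is then a sum of Kronecker products
     A = C (x) I + P (x) F + Q (x) B,
   where C is the rook graph K_n x K_n on G x G, P and Q are the 0/1 matrices of
   [q.1 = p.1 p.2] and [q.2 = p.1 p.2], and F, B are the forward and backward
   circulants of Z_m; since m is odd, F + B = J - I.  The multiplication table of G
   is a Latin square, which gives P^2 = PQ = QP = Q^2 = J, C P = 2 (J - P) and
   P C = (n - 2) P + J (likewise for Q), while C^2 = 2(n-1) I + (n-2) C + 2 (J - I - C).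
   Expanding A^2 with (X (x) Y)(X' (x) Y') = X X' (x) Y Y' and these identities gives
   A^2 = (2n - 4) I + (n - 4) A + (m + 1) J. *)

Section Kernels.
Variable R : comPzRingType.

(* A kernel [S -> T -> R] is a matrix with rows indexed by [S] and columns by [T]. *)
Definition kmul (S T U : finType) (K : S -> T -> R) (L : T -> U -> R) : S -> U -> R :=
  fun s u => \sum_t K s t * L t u.

Definition ktens (S1 S2 T1 T2 : finType) (K : S1 -> T1 -> R) (L : S2 -> T2 -> R) :
    S1 * S2 -> T1 * T2 -> R :=
  fun s t => K s.1 t.1 * L s.2 t.2.

Definition kid {T : finType} : T -> T -> R := fun s t => (s == t)%:R.
Definition koff {T : finType} : T -> T -> R := fun s t => (s != t)%:R.

Lemma kmulDl (S T U : finType) (K1 K2 : S -> T -> R) (L : T -> U -> R) s u :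
  kmul (fun s t => K1 s t + K2 s t) L s u = kmul K1 L s u + kmul K2 L s u.
Proof. by rewrite /kmul -big_split; apply: eq_bigr => t _; rewrite mulrDl. Qed.

Lemma kmulDr (S T U : finType) (K : S -> T -> R) (L1 L2 : T -> U -> R) s u :
  kmul K (fun t u => L1 t u + L2 t u) s u = kmul K L1 s u + kmul K L2 s u.
Proof. by rewrite /kmul -big_split; apply: eq_bigr => t _; rewrite mulrDr. Qed.

Lemma sum_kid_mull (T : finType) (s : T) (F : T -> R) : \sum_t kid s t * F t = F s.
Proof.
rewrite (bigD1 s) //= /kid eqxx mul1r big1 ?addr0 // => t /negbTE.
by rewrite eq_sym => ->; rewrite mul0r.
Qed.

Lemma sum_kid_mulr (T : finType) (u : T) (F : T -> R) : \sum_t F t * kid t u = F u.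
Proof.
by under eq_bigr do rewrite mulrC /kid eq_sym; apply: sum_kid_mull.
Qed.

Lemma kmul_idl (S T : finType) (K : S -> T -> R) s t : kmul kid K s t = K s t.
Proof. exact: sum_kid_mull. Qed.

Lemma kmul_idr (S T : finType) (K : S -> T -> R) s t : kmul K kid s t = K s t.
Proof. exact: sum_kid_mulr. Qed.

Lemma sum_kid_row (T : finType) (s : T) : \sum_t kid s t = 1.
Proof. by rewrite -[RHS](sum_kid_mull s (fun=> 1)); apply: eq_bigr => t _; rewrite mulr1. Qed.

Lemma sum_kid_col (T : finType) (t : T) : \sum_s kid s t = 1.
Proof. by rewrite -[RHS](sum_kid_mulr t (fun=> 1)); apply: eq_bigr => s _; rewrite mul1r. Qed.

Lemma koffE (T : finType) (s t : T) : koff s t = 1 - kid s t.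
Proof. by rewrite /koff /kid; case: (s == t); rewrite ?subr0 ?subrr. Qed.

Lemma sum_koff_row (T : finType) (s : T) : \sum_t koff s t = #|T|%:R - 1.
Proof. by under eq_bigr do rewrite koffE; rewrite sumrB sumr_const sum_kid_row. Qed.

Lemma sum_koff_col (T : finType) (t : T) : \sum_s koff s t = #|T|%:R - 1.
Proof. by under eq_bigr do rewrite koffE; rewrite sumrB sumr_const sum_kid_col. Qed.

Lemma sum_koff_mull (T : finType) (s : T) (F : T -> R) :
  \sum_t koff s t * F t = \sum_t F t - F s.
Proof.
under eq_bigr do rewrite koffE mulrBl mul1r.
by rewrite sumrB sum_kid_mull.
Qed.

Lemma kmul_koff (T : finType) (s u : T) : kmul koff koff s u = #|T|%:R - 2 + kid s u.
Proof. by rewrite /kmul sum_koff_mull sum_koff_col !koffE; ring. Qed.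

Lemma sum_pair (T1 T2 : finType) (F : T1 * T2 -> R) :
  \sum_t F t = \sum_a \sum_b F (a, b).
Proof. by rewrite pair_bigA; apply: eq_bigr => -[]. Qed.

Lemma kmul_tens (S1 S2 T1 T2 U1 U2 : finType) (K : S1 -> T1 -> R) (L : S2 -> T2 -> R)
    (K' : T1 -> U1 -> R) (L' : T2 -> U2 -> R) s u :
  kmul (ktens K L) (ktens K' L') s u = kmul K K' s.1 u.1 * kmul L L' s.2 u.2.
Proof.
rewrite /kmul big_distrlr /= pair_bigA; apply: eq_bigr => -[a b] _.
by rewrite /ktens mulrACA.
Qed.

Lemma sum_ktens_row (S1 S2 T1 T2 : finType) (K : S1 -> T1 -> R) (L : S2 -> T2 -> R) s :
  \sum_t ktens K L s t = (\sum_a K s.1 a) * (\sum_b L s.2 b).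
Proof. by rewrite big_distrlr pair_bigA. Qed.

Lemma sum_ktens_col (S1 S2 T1 T2 : finType) (K : S1 -> T1 -> R) (L : S2 -> T2 -> R) t :
  \sum_s ktens K L s t = (\sum_a K a t.1) * (\sum_b L b t.2).
Proof. by rewrite big_distrlr pair_bigA. Qed.

Lemma sum_ktens_mul (S1 S2 T1 T2 : finType) (K : S1 -> T1 -> R) (L : S2 -> T2 -> R)
    (F : T1 * T2 -> R) s :
  \sum_t ktens K L s t * F t = \sum_a K s.1 a * \sum_b L s.2 b * F (a, b).
Proof.
rewrite sum_pair; apply: eq_bigr => a _; rewrite big_distrr.
by apply: eq_bigr => b _; rewrite /ktens /= mulrA.
Qed.

Lemma kid_tens (S1 S2 : finType) (s t : S1 * S2) : kid s t = ktens kid kid s t.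
Proof. by case: s t => [s1 s2] [t1 t2]; rewrite /ktens /kid xpair_eqE -mulnb natrM. Qed.

Definition rook {T : finType} : T * T -> T * T -> R :=
  fun p q => ktens kid koff p q + ktens koff kid p q.

Lemma sum_rook_row (T : finType) (p : T * T) : \sum_q rook p q = 2 * (#|T|%:R - 1).
Proof. by rewrite big_split /= !sum_ktens_row !sum_kid_row !sum_koff_row; ring. Qed.

Lemma sum_rook_col (T : finType) (q : T * T) : \sum_p rook p q = 2 * (#|T|%:R - 1).
Proof. by rewrite big_split /= !sum_ktens_col !sum_kid_col !sum_koff_col; ring. Qed.

Lemma rook_square (T : finType) (p q : T * T) :
  kmul rook rook p q =
  2 * (#|T|%:R - 1) * kid p q + (#|T|%:R - 2) * rook p q + 2 * (1 - kid p q - rook p q).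
Proof.
rewrite /rook !kmulDl !kmulDr !kmul_tens !kmul_idl !kmul_idr !kmul_koff kid_tens /ktens.
by rewrite !koffE; ring.
Qed.

End Kernels.

Arguments kid {R T}.
Arguments koff {R T}.
Arguments rook {R T}.

Section Products.
Variables (R : comPzRingType) (gT : finGroupType).
Local Notation n := #|gT|.

Definition prodl : gT * gT -> gT * gT -> R := fun p q => (q.1 == p.1 * p.2)%g%:R.
Definition prodr : gT * gT -> gT * gT -> R := fun p q => (q.2 == p.1 * p.2)%g%:R.

Lemma sum_eq_mull (x u : gT) : \sum_b ((u == x * b)%g)%:R = 1 :> R.
Proof.
rewrite (reindex_inj (mulgI x^-1)%g); under eq_bigr do rewrite mulKVg.
exact: sum_kid_row.
Qed.

Lemma sum_eq_mulr (y u : gT) : \sum_a ((u == a * y)%g)%:R = 1 :> R.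
Proof.
rewrite (reindex_inj (mulIg y^-1)%g); under eq_bigr do rewrite mulgKV.
exact: sum_kid_row.
Qed.

Lemma kmul_prodl (T : finType) (K : gT * gT -> T -> R) p t :
  kmul prodl K p t = \sum_b K (p.1 * p.2, b)%g t.
Proof.
rewrite /kmul sum_pair (bigD1 (p.1 * p.2)%g) //= [X in _ + X]big1 => [|a /negbTE ha].
  by rewrite addr0; apply: eq_bigr => b _; rewrite /prodl /= eqxx mul1r.
by apply: big1 => b _; rewrite /prodl /= ha mul0r.
Qed.

Lemma kmul_prodr (T : finType) (K : gT * gT -> T -> R) p t :
  kmul prodr K p t = \sum_a K (a, p.1 * p.2)%g t.
Proof.
rewrite /kmul sum_pair exchange_big (bigD1 (p.1 * p.2)%g) //= [X in _ + X]big1 => [|b /negbTE hb].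
  by rewrite addr0; apply: eq_bigr => a _; rewrite /prodr /= eqxx mul1r.
by apply: big1 => a _; rewrite /prodr /= hb mul0r.
Qed.

Lemma kmul_prod p q :
  [/\ kmul prodl prodl p q = 1, kmul prodl prodr p q = 1,
      kmul prodr prodl p q = 1 & kmul prodr prodr p q = 1].
Proof.
by rewrite !kmul_prodl !kmul_prodr /prodl /prodr /= !sum_eq_mull !sum_eq_mulr.
Qed.

Lemma kmul_rook_prodl p q : kmul rook prodl p q = 2 * (1 - prodl p q).
Proof.
rewrite /rook kmulDl /kmul !sum_ktens_mul sum_kid_mull.
under [X in _ + X]eq_bigr do rewrite sum_kid_mull.
by rewrite !sum_koff_mull /prodl /= sum_eq_mull sum_eq_mulr; ring.
Qed.

Lemma kmul_rook_prodr p q : kmul rook prodr p q = 2 * (1 - prodr p q).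
Proof.
rewrite /rook kmulDl /kmul !sum_ktens_mul sum_kid_mull.
under [X in _ + X]eq_bigr do rewrite sum_kid_mull.
by rewrite !sum_koff_mull /prodr /= sum_eq_mull sum_eq_mulr; ring.
Qed.

Lemma kmul_prodl_rook p q : kmul prodl rook p q = (n%:R - 2) * prodl p q + 1.
Proof.
rewrite kmul_prodl /rook big_split /= /ktens /= -!big_distrr /=.
by rewrite sum_koff_col sum_kid_col koffE /kid /prodl eq_sym; ring.
Qed.

Lemma kmul_prodr_rook p q : kmul prodr rook p q = (n%:R - 2) * prodr p q + 1.
Proof.
rewrite kmul_prodr /rook big_split /= /ktens /= -!big_distrl /=.
by rewrite sum_koff_col sum_kid_col koffE /kid /prodr eq_sym; ring.
Qed.

Lemma sum_prodl_row p : \sum_q prodl p q = n%:R.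
Proof.
by rewrite sum_pair exchange_big; under eq_bigr do rewrite sum_kid_col; rewrite sumr_const.
Qed.

Lemma sum_prodr_row p : \sum_q prodr p q = n%:R.
Proof.
by rewrite sum_pair; under eq_bigr do rewrite sum_kid_col; rewrite sumr_const.
Qed.

Lemma sum_prodl_col q : \sum_p prodl p q = n%:R.
Proof.
by rewrite sum_pair; under eq_bigr do rewrite sum_eq_mull; rewrite sumr_const.
Qed.

Lemma sum_prodr_col q : \sum_p prodr p q = n%:R.
Proof.
by rewrite sum_pair; under eq_bigr do rewrite sum_eq_mull; rewrite sumr_const.
Qed.

End Products.

Arguments prodl {R gT}.
Arguments prodr {R gT}.

Lemma bwd_range_sym (m : nat) (i j : 'I_m) : bwd_range i j = fwd_range j i.
Proof.
have le_dm (d : 'I_m) : (d <= m)%N by exact: ltnW.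
apply/existsP/existsP => -[d /andP[hd /eqP e]]; exists d; rewrite hd /=.
  by rewrite e modnDml -addnA subnK // modnDr modn_small.
by rewrite e modnDml -addnA subnKC // modnDr modn_small.
Qed.

Lemma fwd_rangeE (m : nat) (i j : 'I_m) :
  fwd_range i j = (i < j <= i + (m - 1)./2)%N || (j + m <= i + (m - 1)./2)%N.
Proof.
set h := (m - 1)./2; have hi := ltn_ord i; have hj := ltn_ord j.
have hh : (h <= m - 1)%N by rewrite leq_half_double; lia.
rewrite /fwd_range -/h; apply/existsP/idP => [[d /andP[/andP[d1 dh] /eqP ->]]|].
  have hd := ltn_ord d.
  case: (ltnP (i + d) m) => hid; first by rewrite modn_small //; lia.
  rewrite -(subnK hid) modnDr modn_small; lia.
case/orP => H.
  have hd : (j - i < m)%N by lia.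
  exists (Ordinal hd); rewrite /=; apply/andP; split; first lia.
  by rewrite subnKC ?modn_small //; lia.
have hd : (j + m - i < m)%N by lia.
exists (Ordinal hd); rewrite /=; apply/andP; split; first lia.
by rewrite subnKC ?modnDr ?modn_small //; lia.
Qed.

Lemma fwd_bwd_partition (m : nat) (i j : 'I_m) :
  odd m -> (fwd_range i j + bwd_range i j)%N = (i != j).
Proof.
move=> m_odd; have hi := ltn_ord i; have hj := ltn_ord j.
have : ((m - 1)./2).*2 = (m - 1)%N by rewrite halfK oddB /= ?m_odd ?subn0 //; lia.
rewrite bwd_range_sym !fwd_rangeE -val_eqE -muln2 /=.
move: (m - 1)./2 => h; lia.
Qed.

Section Gamma.
Variables (R : comPzRingType) (gT : finGroupType) (m : nat).
Hypothesis m_odd : odd m.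
Local Notation n := #|gT|.

Definition fwd : 'I_m -> 'I_m -> R := fun i j => (fwd_range i j)%:R.
Definition bwd : 'I_m -> 'I_m -> R := fun i j => (bwd_range i j)%:R.

Lemma fwd_add_bwd i j : fwd i j + bwd i j = koff i j.
Proof. by rewrite -natrD fwd_bwd_partition. Qed.

Lemma kmul_fwd_bwd i j :
  kmul fwd fwd i j + kmul fwd bwd i j + kmul bwd fwd i j + kmul bwd bwd i j =
  m%:R - 2 + kid i j.
Proof.
have := kmul_koff R i j; rewrite card_ord => <-.
by rewrite /kmul -!big_split; apply: eq_bigr => k _ /=; rewrite -!fwd_add_bwd; ring.
Qed.

Definition gamma : gT * gT * 'I_m -> gT * gT * 'I_m -> R :=
  fun s e => ktens rook kid s e + ktens prodl fwd s e + ktens prodr bwd s e.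

(* The four clauses defining [Gamma_adj] are mutually exclusive (the last two
   because m is odd), so the disjunction is their sum. *)
Lemma Gamma_adjE s e : (Gamma_adj s e)%:R = gamma s e.
Proof.
case: s e => [[x y] i] [[u v] j]; rewrite /gamma /rook /ktens /kid /koff /prodl /prodr /fwd /bwd /=.
rewrite -!(natrM, natrD); congr _%:R.
move: (fwd_bwd_partition i j m_odd); rewrite /Gamma_adj.
by case: (x == u); case: (y == v); case: (i == j); case: (u == _); case: (v == _);
  case: fwd_range; case: bwd_range.
Qed.

Lemma Gamma_adj_irrefl (s : gT * gT * 'I_m) : ~~ Gamma_adj s s.
Proof.
case: s => [[x y] i]; move: (fwd_bwd_partition i i m_odd).
by rewrite /Gamma_adj !eqxx /=; case: fwd_range; case: bwd_range; rewrite ?andbF.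
Qed.

Lemma sum_gamma_row s : \sum_e gamma s e = 2 * (n%:R - 1) + n%:R * (m%:R - 1).
Proof.
rewrite !big_split /= !sum_ktens_row sum_rook_row sum_kid_row !sum_prodl_row !sum_prodr_row.
rewrite -addrA -mulrDr -big_split /=; under eq_bigr do rewrite fwd_add_bwd.
by rewrite sum_koff_row card_ord; ring.
Qed.

Lemma sum_gamma_col e : \sum_s gamma s e = 2 * (n%:R - 1) + n%:R * (m%:R - 1).
Proof.
rewrite !big_split /= !sum_ktens_col sum_rook_col sum_kid_col !sum_prodl_col !sum_prodr_col.
rewrite -addrA -mulrDr -big_split /=; under eq_bigr do rewrite fwd_add_bwd.
by rewrite sum_koff_col card_ord; ring.
Qed.

Lemma gamma_square s e :
  kmul gamma gamma s e =
  (2 * n%:R + m%:R - 3) * kid s e + (n%:R + m%:R - 3) * gamma s e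
  + (m%:R + 1) * (1 - kid s e - gamma s e).
Proof.
case: s e => [p i] [q j]; rewrite /gamma !kmulDl !kmulDr !kmul_tens /=.
rewrite rook_square kmul_rook_prodl kmul_rook_prodr kmul_prodl_rook kmul_prodr_rook.
have [-> -> -> ->] := kmul_prod R p q.
rewrite !kmul_idl !kmul_idr [kid (p, i) _]kid_tens /ktens /=.
(* Eliminating [bwd] leaves a polynomial identity. *)
have -> : kmul bwd bwd i j = m%:R - 2 + kid i j
    - (kmul fwd fwd i j + kmul fwd bwd i j + kmul bwd fwd i j).
  by rewrite -kmul_fwd_bwd; ring.
have -> : bwd i j = 1 - kid i j - fwd i j by rewrite -koffE -fwd_add_bwd; ring.
ring.
Qed.

End Gamma.

Local Close Scope ring_scope.

Theorem mainTheorem1 (gT : finGroupType) (n m : nat)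
  (hn : #|gT| = n) (hn2 : 2 <= n) (hm3 : 3 <= m) (hmodd : odd m) :
  is_dsrg (@Gamma_adj gT m) (m * n ^ 2) (m * n + n - 2) (2 * n + m - 3)
    (n + m - 3) (m + 1).
Proof.
have adjmE s e : adjm (@Gamma_adj gT m) s e = @gamma int gT m s e.
  by rewrite /adjm -natz Gamma_adjE.
split.
- by rewrite !card_prod card_ord hn; lia.
- exact: Gamma_adj_irrefl.
- by move=> s; under eq_bigr do rewrite adjmE; rewrite sum_gamma_row // hn; lia.
- by move=> e; under eq_bigr do rewrite adjmE; rewrite sum_gamma_col // hn; lia.
move=> s e; under eq_bigr do rewrite !adjmE.
rewrite -/(kmul _ _ s e) gamma_square // adjmE /kid !natz hn.
by congr (_ * _ + _ * _ + _ * _)%R; lia.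
Qed.
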